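(* There exists a $CS(3,K_4^{(3)}+e,gn)$ of type $(g^n:0)$ for each $(g,n)\in\{(5,3),(5,5),(10,2),(15,2)\}$.
   Context: $K_4^{(3)}+e$ denotes the 3-uniform hypergraph with vertex set $\{1,2,3,4,5\}$ and edge set $\{\{1,2,3\},\{1,2,4\},\{1,3,4\},\{2,3,4\},\{3,4,5\}\}$. A $CS(3,K_4^{(3)}+e,gn+s)$ of type $(g^n:s)$ is a quadruple $(X,S,\mathcal{T},\mathcal{A})$ where $|X|=gn+s$, $S\subseteq X$ with $|S|=s$ (the stem), $\mathcal{T}=\{G_1,\dots,G_n\}$ is a partition of $X\setminus S$ into $n$ groups of size $g$, and $\mathcal{A}$ is a collection of hypergraphs on subsets of $X$ (blocks), each isomorphic to $K_4^{(3)}+e$, such that every 3-subset $T\subseteq X$ with $|T\cap(S\cup G_i)|<3$ for all $i$ is an edge of exactly one block, and no 3-subset of any $S\cup G_i$ is an edge of any block. Here $s=0$. *)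

From mathcomp Require Import all_boot.
Set Implicit Arguments. Unset Strict Implicit. Unset Printing Implicit Defensive.

(* Vertices 1..5 of K_4^(3)+e are encoded as 0..4 in 'I_5. *)
Definition v5 (k : nat) : 'I_5 := inord k.

Definition K4e_edges : {set {set 'I_5}} :=
  [set [set v5 0; v5 1; v5 2]; [set v5 0; v5 1; v5 3]; [set v5 0; v5 2; v5 3];
       [set v5 1; v5 2; v5 3]; [set v5 2; v5 3; v5 4]].

(* A block: a 3-uniform hypergraph on a subset of X (given by its edge set;
   K_4^(3)+e has no isolated vertices) isomorphic to K_4^(3)+e, i.e. the image
   of K4e_edges under an injective vertex map. *)
Definition isK4e (X : finType) (B : {set {set X}}) : Prop :=
  exists f : 'I_5 -> X, injective f /\ B = (fun e : {set 'I_5} => f @: e) @: K4e_edges.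

(* (X, S, P, A) is a CS(3, K_4^(3)+e, gn+s) of type (g^n : s) with X the
   point type (of size gn+s), S the stem, P the set of groups, A the blocks. *)
Definition is_CS_K4e (X : finType) (g n s : nat) (S : {set X})
    (P : {set {set X}}) (A : {set {set {set X}}}) : Prop :=
  [/\ #|X| = g * n + s, #|S| = s,
      partition P (~: S) /\ #|P| = n /\ (forall G, G \in P -> #|G| = g),
      (forall B, B \in A -> isK4e B) &
      (forall T : {set X}, #|T| = 3 ->
         (forall G, G \in P -> #|T :&: (S :|: G)| < 3) ->
         #|[set B in A | T \in B]| = 1) /\
      (forall B, B \in A -> forall E, E \in B -> forall G, G \in P ->
         ~~ (E \subset S :|: G))].

From mathcomp Require Import all_boot.
Set Implicit Arguments. Unset Strict Implicit. Unset Printing Implicit Defensive.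

(* The four designs are explicit.  The points are 0, ..., g n - 1 with groups the
   intervals [i g, (i + 1) g), and a block is a 5-tuple of points carrying
   K_4^(3)+e.  A 3-set of points is identified with its increasing list, so
   "every crossing triple lies in exactly one block" becomes: the list of all
   block edges is a permutation of the list of crossing triples.  After sorting
   the former, this is a single list comparison decided by computation. *)

Fixpoint nat_tuples (k N : nat) : seq (seq nat) :=
  if k is k'.+1 then [seq x :: s | x <- iota 0 N, s <- nat_tuples k' N] else [:: [::]].

Lemma mem_nat_tuples k N s : (s \in nat_tuples k N) = (size s == k) && all (gtn N) s.
Proof.
elim: k s => [|k IHk] s; first by case: s.
apply/allpairsP/idP => [[[x t] /= [x_in t_in ->]]|].
  by move: x_in t_in; rewrite mem_iota IHk /= eqSS => -> /andP[-> ->].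
case: s => [|x s] //; rewrite /= eqSS => /and3P[size_s x_lt s_lt].
by exists (x, s); rewrite mem_iota IHk size_s s_lt.
Qed.

Lemma nat_tuples_uniq k N : uniq (nat_tuples k N).
Proof.
elim: k => [|k IHk] //=; apply: allpairs_uniq => //; first exact: iota_uniq.
by move=> [x s] [y t] _ _ /= [-> ->].
Qed.

Lemma count_mem_flatten1 (T : eqType) (x : T) (ss : seq (seq T)) :
  count_mem x (flatten ss) = 1 -> count (fun s => x \in s) ss = 1.
Proof.
elim: ss => [|s ss IHss] //=; rewrite count_cat.
have [x_s|x_s] := boolP (x \in s); last by rewrite (count_memPn x_s).
move: x_s; rewrite -has_pred1 has_count; case: count => [|[|c]] //= _ [/count_memPn x_ss].
apply/eqP; rewrite eqSS eqn0Ngt -has_count; apply/hasPn => s' s'_ss.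
by apply: contra x_ss => x_s'; apply/flattenP; exists s'.
Qed.

Definition crossing (g : nat) (s : seq nat) : bool := ~~ constant [seq x %/ g | x <- s].

Definition crossing_triples (g N : nat) : seq (seq nat) :=
  [seq s <- nat_tuples 3 N | sorted ltn s && crossing g s].

Definition K4e_triples : seq (seq nat) :=
  [:: [:: 0; 1; 2]; [:: 0; 1; 3]; [:: 0; 2; 3]; [:: 1; 2; 3]; [:: 2; 3; 4]].

Definition block_triples (bl : seq nat) : seq (seq nat) :=
  [seq [seq nth 0 bl i | i <- t] | t <- K4e_triples].

Definition block_edges (bl : seq nat) : seq (seq nat) := map (sort leq) (block_triples bl).

Definition block_ok (N : nat) (bl : seq nat) : bool :=
  [&& size bl == 5, uniq bl & all (gtn N) bl].

(* Any comparison works for soundness, which only uses that sorting permutes. *)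
Fixpoint lexle (s t : seq nat) : bool :=
  match s, t with
  | [::], _ => true
  | _ :: _, [::] => false
  | x :: s', y :: t' => (x < y) || (x == y) && lexle s' t'
  end.

Definition cs_certificate (g n : nat) (L : seq (seq nat)) : bool :=
  all (block_ok (g * n)) L &&
  (sort lexle (flatten (map block_edges L)) == crossing_triples g (g * n)).

Section PointEncoding.
Variable m : nat.
Local Notation N := m.+1.

Definition pt (a : nat) : 'I_N := inord a.
Definition code (E : {set 'I_N}) : seq nat := map val (enum E).

Lemma pt_inj : {in gtn N &, injective pt}.
Proof. by move=> a b lt_a lt_b /(congr1 val); rewrite /= !inordK. Qed.

Lemma code_inj : injective code.
Proof.
move=> E1 E2 /(inj_map val_inj) eq_enum; apply/setP => x.
by rewrite -mem_enum eq_enum mem_enum.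
Qed.

Lemma code_sorted E : sorted ltn (code E).
Proof.
rewrite sorted_map /enum_mem -enumT; apply: sorted_filter.
  by move=> x y z; apply: ltn_trans.
by rewrite -sorted_map val_enum_ord iota_ltn_sorted.
Qed.

Lemma size_code E : size (code E) = #|E|.
Proof. by rewrite size_map cardE. Qed.

Lemma code_bounded E : all (gtn N) (code E).
Proof. by apply/allP => _ /mapP[x _ ->]; exact: ltn_ord. Qed.

Lemma mem_code E a : a < N -> (a \in code E) = (pt a \in E).
Proof.
move=> lt_aN; apply/mapP/idP => [[x xE ->]|aE]; first by rewrite /pt inord_val -mem_enum.
by exists (pt a); rewrite ?mem_enum //= inordK.
Qed.

Lemma code_set_seq s : uniq s -> all (gtn N) s -> code [set:: map pt s] = sort leq s.
Proof.
move=> s_uniq s_lt; apply: (irr_sorted_eq ltn_trans ltnn (code_sorted _)).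
  by rewrite ltn_sorted_uniq_leq sort_uniq s_uniq sort_sorted //; exact: leq_total.
move=> a; rewrite mem_sort; have [lt_aN|ge_aN] := ltnP a N.
  rewrite mem_code // inE; apply/mapP/idP => [[b bs eq_ab]|a_s]; last by exists a.
  by rewrite (pt_inj _ _ eq_ab) // inE; apply: (allP s_lt).
by apply/idP/idP => [/(allP (code_bounded _))|/(allP s_lt)]; rewrite /= ltnNge ge_aN.
Qed.

Definition block_map (bl : seq nat) (k : 'I_5) : 'I_N := pt (nth 0 bl k).
Definition block (bl : seq nat) : {set {set 'I_N}} :=
  (fun e : {set 'I_5} => block_map bl @: e) @: K4e_edges.

Lemma block_isK4e bl : block_ok N bl -> isK4e (block bl).
Proof.
case/and3P => /eqP size_bl bl_uniq /allP bl_lt; exists (block_map bl); split => //.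
have nth_lt (k : 'I_5) : nth 0 bl k \in gtn N by apply: bl_lt; rewrite mem_nth ?size_bl.
move=> k l eq_kl; apply/val_inj/eqP.
by rewrite -(nth_uniq 0 _ _ bl_uniq) ?size_bl //= (pt_inj (nth_lt k) (nth_lt l) eq_kl).
Qed.

Lemma blockE bl : block bl = [set:: [seq [set:: map pt t] | t <- block_triples bl]].
Proof.
have map_v5 k : k < 5 -> block_map bl (v5 k) = pt (nth 0 bl k).
  by move=> lt_k5; rewrite /block_map /v5 inordK.
have set3 (a b c : 'I_N) : [set:: [:: a; b; c]] = [set a; b; c].
  by apply/setP => x; rewrite !inE -orbA.
rewrite /block /K4e_edges !(imsetU (fun e : {set 'I_5} => block_map bl @: e)) !imset_set1.
rewrite !imsetU !imset_set1 !map_v5 //= !set3.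
by apply/setP => X; rewrite !inE -!orbA.
Qed.

Lemma block_triple_ok bl t :
  block_ok N bl -> t \in block_triples bl -> uniq t && all (gtn N) t.
Proof.
case/and3P => /eqP size_bl bl_uniq /allP bl_lt /mapP[i i_K4e ->].
have /andP[i_uniq /allP i_lt] : uniq i && all (gtn 5) i by move: i i_K4e; apply/allP.
apply/andP; split.
  rewrite map_inj_in_uniq // => k l k_i l_i /eqP.
  by rewrite nth_uniq ?size_bl //; [move/eqP | apply: i_lt | apply: i_lt].
by apply/allP => _ /mapP[k k_i ->]; apply: bl_lt; rewrite mem_nth // size_bl; exact: i_lt.
Qed.

Lemma mem_block bl T : block_ok N bl -> (T \in block bl) = (code T \in block_edges bl).
Proof.
move=> bl_ok; rewrite blockE inE -(mem_map code_inj) -map_comp.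
congr (_ \in _); apply/eq_in_map => t /(block_triple_ok bl_ok)/andP[t_uniq t_lt].
exact: code_set_seq.
Qed.

End PointEncoding.

Arguments pt {m}.
Arguments code {m}.
Arguments block {m}.

Section Groups.
Variables g n m : nat.
Hypothesis gn_eq : g * n = m.+1.
Local Notation N := m.+1.

Definition group_part (i : nat) : {set 'I_N} := [set x : 'I_N | x %/ g == i].
Definition group_parts : {set {set 'I_N}} := [set group_part i | i : 'I_n].

Lemma group_size_gt0 : 0 < g.
Proof. by move: gn_eq; case: g. Qed.

Lemma group_index_lt a : a < N -> a %/ g < n.
Proof. by move=> lt_aN; rewrite ltn_divLR ?group_size_gt0 // mulnC gn_eq. Qed.

Lemma card_group_part i : i < n -> #|group_part i| = g.
Proof.
move=> lt_in; have offset_lt (k : 'I_g) : i * g + k < N.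
  rewrite -gn_eq; apply: (@leq_trans (i.+1 * g)); first by rewrite mulSnr ltn_add2l.
  by rewrite mulnC leq_mul2l lt_in orbT.
pose shift (k : 'I_g) : 'I_N := Ordinal (offset_lt k).
have -> : group_part i = [set shift k | k : 'I_g].
  apply/setP => x; rewrite inE; apply/eqP/imsetP => [x_i|[k _ ->]].
    by exists (Ordinal (ltn_pmod x group_size_gt0)) => //; apply: val_inj; rewrite /= -x_i -divn_eq.
  by rewrite /= divnMDl ?group_size_gt0 // divn_small ?addn0.
by rewrite card_imset ?card_ord // => k l /(congr1 val) /= /addnI; apply: val_inj.
Qed.

Lemma group_part_inj : {in gtn n &, injective group_part}.
Proof.
move=> i j lt_in _ eq_ij.
have /card_gt0P[x x_i] : 0 < #|group_part i| by rewrite card_group_part // group_size_gt0.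
by move: x_i (x_i); rewrite {2}eq_ij !inE => /eqP <- /eqP.
Qed.

Lemma card_group_parts : #|group_parts| = n.
Proof.
rewrite card_imset ?card_ord // => i j /group_part_inj eq_ij; apply: val_inj.
by apply: eq_ij; rewrite inE.
Qed.

Lemma group_parts_partition : partition group_parts [set: 'I_N].
Proof.
apply/and3P; split.
- apply/eqP/setP => x; rewrite inE; apply/bigcupP.
  exists (group_part (x %/ g)); last by rewrite inE.
  by apply/imsetP; exists (Ordinal (group_index_lt (ltn_ord x))).
- apply/trivIsetP => _ _ /imsetP[i _ ->] /imsetP[j _ ->] neq_ij.
  rewrite -setI_eq0; apply/eqP/setP => x; rewrite !inE.
  by apply: contraNF neq_ij => /andP[/eqP <- /eqP <-].
- apply/imsetP => -[i _ eq0]; have := card_group_part (ltn_ord i).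
  by rewrite -eq0 cards0 => g0; move: group_size_gt0; rewrite -g0.
Qed.

Lemma subset_group_part (T : {set 'I_N}) i :
  (T \subset group_part i) = all (fun x => x %/ g == i) (code T).
Proof.
apply/subsetP/allP => [T_i _ /mapP[x x_T ->]|T_i x x_T].
  by have := T_i x; rewrite -mem_enum inE => /(_ x_T).
by rewrite inE; apply: T_i; apply: map_f; rewrite mem_enum.
Qed.

Lemma crossing_not_subset (T G : {set 'I_N}) :
  crossing g (code T) -> G \in group_parts -> ~~ (T \subset G).
Proof.
move=> T_cross /imsetP[i _ ->]; apply: contraL T_cross.
rewrite subset_group_part /crossing negbK => T_i.
have: all (pred1 (i : nat)) [seq x %/ g | x <- code T] by rewrite all_map.
exact: all_pred1_constant.
Qed.

Lemma noncrossing_subset (T : {set 'I_N}) : T != set0 -> ~~ crossing g (code T) ->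
  exists2 G, G \in group_parts & T \subset G.
Proof.
move=> T_n0; rewrite /crossing negbK; case code_T: (code T) => [|x s].
  by move: T_n0; rewrite -(code_inj (_ : code T = code set0)) ?eqxx // code_T /code enum_set0.
have x_lt : x < N by have := code_bounded T; rewrite code_T => /andP[].
move=> /= s_x; exists (group_part (x %/ g)).
  by apply/imsetP; exists (Ordinal (group_index_lt x_lt)).
by rewrite subset_group_part code_T /= eqxx; rewrite all_map in s_x.
Qed.

End Groups.

Section Soundness.
Variables (g n m : nat) (L : seq (seq nat)).
Hypotheses (gn_eq : g * n = m.+1) (L_cert : cs_certificate g n L).
Local Notation N := m.+1.

Definition blocks : {set {set {set 'I_N}}} := [set:: map block L].

Lemma blocks_ok bl : bl \in L -> block_ok N bl.
Proof. by move: bl; case/andP: L_cert; rewrite gn_eq => /allP. Qed.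

Lemma perm_block_edges : perm_eq (flatten (map block_edges L)) (crossing_triples g N).
Proof. by case/andP: L_cert; rewrite gn_eq => _ /eqP <-; rewrite perm_sym perm_sort. Qed.

Lemma code_crossing_triple (T : {set 'I_N}) :
  #|T| = 3 -> crossing g (code T) -> code T \in crossing_triples g N.
Proof.
move=> card_T T_cross.
by rewrite mem_filter code_sorted T_cross mem_nat_tuples size_code card_T code_bounded.
Qed.

Lemma block_edge_crossing bl (E : {set 'I_N}) :
  bl \in L -> E \in block bl -> crossing g (code E).
Proof.
move=> bl_L; rewrite mem_block ?blocks_ok // => E_bl.
have: code E \in crossing_triples g N.
  by rewrite -(perm_mem perm_block_edges); apply/flattenP; exists (block_edges bl); rewrite ?map_f.
by rewrite mem_filter => /andP[/andP[]].
Qed.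

Lemma blocks_containing (T : {set 'I_N}) :
  [set B in blocks | T \in B] = [set:: map block [seq bl <- L | code T \in block_edges bl]].
Proof.
apply/setP => B; rewrite !inE; apply/andP/mapP => [[/mapP[bl bl_L ->] T_bl]|[bl]].
  by exists bl; rewrite // mem_filter -mem_block ?blocks_ok ?T_bl.
rewrite mem_filter => /andP[T_bl bl_L] ->; split; first exact: map_f.
by rewrite mem_block ?blocks_ok.
Qed.

Lemma card_blocks_containing (T : {set 'I_N}) :
  #|T| = 3 -> crossing g (code T) -> #|[set B in blocks | T \in B]| = 1.
Proof.
move=> card_T T_cross; rewrite blocks_containing.
have: count_mem (code T) (flatten (map block_edges L)) = 1.
  rewrite (permP perm_block_edges) count_uniq_mem ?code_crossing_triple //.
  exact/filter_uniq/nat_tuples_uniq.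
move/count_mem_flatten1; rewrite count_map -size_filter.
by case: filter => [|bl [|]] //= _; rewrite set_seq1 cards1.
Qed.

Theorem cs_certificate_sound :
  exists (P : {set {set 'I_N}}) (A : {set {set {set 'I_N}}}), is_CS_K4e g n 0 set0 P A.
Proof.
exists (group_parts g n m), blocks; split.
- by rewrite card_ord addn0 gn_eq.
- exact: cards0.
- rewrite setC0; split; first exact: group_parts_partition.
  split; first exact: card_group_parts.
  by move=> _ /imsetP[i _ ->]; rewrite (card_group_part gn_eq (ltn_ord i)).
- by move=> B; rewrite /blocks inE => /mapP[bl /blocks_ok bl_ok ->]; apply: block_isK4e.
- split => [T card_T sparse_T|B].
    apply: card_blocks_containing => //; apply: contraT => /(noncrossing_subset gn_eq)[].
      by rewrite -card_gt0 card_T.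
    by move=> G G_P T_G; have := sparse_T G G_P; rewrite set0U (setIidPl T_G) card_T ltnn.
  rewrite /blocks inE => /mapP[bl bl_L ->] E E_bl G G_P; rewrite set0U.
  exact: crossing_not_subset (block_edge_crossing bl_L E_bl) G_P.
Qed.

End Soundness.

Definition design_5_3 : seq (seq nat) := [:: [:: 5; 14; 4; 8; 3]; [:: 6; 10; 0; 9; 4]; [:: 7; 11; 1; 5; 0]; [:: 8; 12; 2; 6; 1]; [:: 9; 13; 3; 7; 2]; [:: 5; 13; 1; 8; 14]; [:: 6; 14; 2; 9; 10]; [:: 7; 10; 3; 5; 11]; [:: 8; 11; 4; 6; 12]; [:: 9; 12; 0; 7; 13]; [:: 0; 7; 5; 14; 10]; [:: 1; 8; 6; 10; 11]; [:: 2; 9; 7; 11; 12]; [:: 3; 5; 8; 12; 13]; [:: 4; 6; 9; 13; 14]; [:: 0; 7; 1; 10; 5]; [:: 1; 8; 2; 11; 6]; [:: 2; 9; 3; 12; 7]; [:: 3; 5; 4; 13; 8]; [:: 4; 6; 0; 14; 9]; [:: 5; 10; 4; 6; 1]; [:: 6; 11; 0; 7; 2]; [:: 7; 12; 1; 8; 3]; [:: 8; 13; 2; 9; 4]; [:: 9; 14; 3; 5; 0]; [:: 10; 12; 1; 3; 5]; [:: 11; 13; 2; 4; 6]; [:: 12; 14; 3; 0; 7]; [:: 13; 10; 4; 1; 8]; [:: 14; 11; 0; 2; 9]; [:: 0; 1; 8; 9; 14]; [:: 1; 2; 9; 5; 10]; [:: 2; 3; 5; 6; 11]; [:: 3; 4;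 6; 7; 12]; [:: 4; 0; 7; 8; 13]; [:: 0; 2; 10; 12; 6]; [:: 1; 3; 11; 13; 7]; [:: 2; 4; 12; 14; 8]; [:: 3; 0; 13; 10; 9]; [:: 4; 1; 14; 11; 5]; [:: 0; 14; 8; 10; 13]; [:: 1; 10; 9; 11; 14]; [:: 2; 11; 5; 12; 10]; [:: 3; 12; 6; 13; 11]; [:: 4; 13; 7; 14; 12]; [:: 0; 5; 2; 8; 3]; [:: 1; 6; 3; 9; 4]; [:: 2; 7; 4; 5; 0]; [:: 3; 8; 0; 6; 1]; [:: 4; 9; 1; 7; 2]; [:: 0; 1; 13; 14; 5]; [:: 1; 2; 14; 10; 6]; [:: 2; 3; 10; 11; 7]; [:: 3; 4; 11; 12; 8]; [:: 4; 0; 12; 13; 9]; [:: 5; 6; 0; 12; 8]; [:: 6; 7; 1; 13; 9]; [:: 7; 8; 2; 14; 5]; [:: 8; 9; 3; 10; 6]; [:: 9; 5; 4; 11; 7]; [:: 5; 10; 8; 11; 9]; [:: 6; 11; 9; 12; 5]; [:: 7; 12; 5; 13; 6]; [:: 8; 13; 6; 14; 7]; [:: 9; 14; 7; 10; 8]; [:: 5; 14; 1; 6; 11]; [:: 6; 10; 2; 7; 12]; [:: 7; 11; 3; 8; 13]; [:: 8; 12; 4; 9; 14]; [:: 9; 13; 0; 5; 10]; [:: 0; 8; 11; 13; 5]; [:: 1; 9; 12; 14; 6]; [:: 2; 5; 13; 10; 7]; [:: 3; 6; 14; 11; 8]; [:: 4; 7; 10; 12; 9]; [:: 0; 2; 6;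 13; 10]; [:: 1; 3; 7; 14; 11]; [:: 2; 4; 8; 10; 12]; [:: 3; 0; 9; 11; 13]; [:: 4; 1; 5; 12; 14]; [:: 0; 11; 1; 12; 6]; [:: 1; 12; 2; 13; 7]; [:: 2; 13; 3; 14; 8]; [:: 3; 14; 4; 10; 9]; [:: 4; 10; 0; 11; 5]].
Definition design_5_5 : seq (seq nat) := [:: [:: 0; 12; 6; 11; 1]; [:: 5; 17; 11; 16; 6]; [:: 10; 22; 16; 21; 11]; [:: 15; 3; 21; 2; 16]; [:: 20; 8; 2; 7; 21]; [:: 1; 13; 7; 12; 2]; [:: 6; 18; 12; 17; 7]; [:: 11; 23; 17; 22; 12]; [:: 16; 4; 22; 3; 17]; [:: 21; 9; 3; 8; 22]; [:: 2; 14; 8; 13; 3]; [:: 7; 19; 13; 18; 8]; [:: 12; 24; 18; 23; 13]; [:: 17; 0; 23; 4; 18]; [:: 22; 5; 4; 9; 23]; [:: 3; 10; 9; 14; 4]; [:: 8; 15; 14; 19; 9]; [:: 13; 20; 19; 24; 14]; [:: 18; 1; 24; 0; 19]; [:: 23; 6; 0; 5; 24]; [:: 4; 11; 5; 10; 0]; [:: 9; 16; 10; 15; 5]; [:: 14; 21; 15; 20; 10]; [:: 19; 2; 20; 1; 15]; [:: 24; 7; 1; 6; 20]; [:: 0; 1; 6; 21; 9]; [:: 5; 6; 11; 2; 14]; [:: 10; 11; 16; 7; 19]; [:: 15; 16; 21; 12; 24]; [:: 20; 21; 2; 17; 0]; [:: 1; 2; 7; 22; 5]; [:: 6; 7; 12;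 3; 10]; [:: 11; 12; 17; 8; 15]; [:: 16; 17; 22; 13; 20]; [:: 21; 22; 3; 18; 1]; [:: 2; 3; 8; 23; 6]; [:: 7; 8; 13; 4; 11]; [:: 12; 13; 18; 9; 16]; [:: 17; 18; 23; 14; 21]; [:: 22; 23; 4; 19; 2]; [:: 3; 4; 9; 24; 7]; [:: 8; 9; 14; 0; 12]; [:: 13; 14; 19; 5; 17]; [:: 18; 19; 24; 10; 22]; [:: 23; 24; 0; 15; 3]; [:: 4; 0; 5; 20; 8]; [:: 9; 5; 10; 1; 13]; [:: 14; 10; 15; 6; 18]; [:: 19; 15; 20; 11; 23]; [:: 24; 20; 1; 16; 4]; [:: 0; 12; 16; 17; 23]; [:: 5; 17; 21; 22; 4]; [:: 10; 22; 2; 3; 9]; [:: 15; 3; 7; 8; 14]; [:: 20; 8; 12; 13; 19]; [:: 1; 13; 17; 18; 24]; [:: 6; 18; 22; 23; 0]; [:: 11; 23; 3; 4; 5]; [:: 16; 4; 8; 9; 10]; [:: 21; 9; 13; 14; 15]; [:: 2; 14; 18; 19; 20]; [:: 7; 19; 23; 24; 1]; [:: 12; 24; 4; 0; 6]; [:: 17; 0; 9; 5; 11]; [:: 22; 5; 14; 10; 16]; [:: 3; 10; 19; 15; 21]; [:: 8; 15; 24; 20; 2]; [:: 13; 20; 0; 1; 7]; [:: 18; 1; 5; 6; 12]; [:: 23; 6; 10; 11; 17]; [:: 4; 11; 15; 16; 22]; [:: 9; 16; 20; 21; 3]; [:: 14; 21; 1; 2; 8]; [:: 19; 2; 6; 7;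 13]; [:: 24; 7; 11; 12; 18]; [:: 0; 16; 18; 4; 7]; [:: 5; 21; 23; 9; 12]; [:: 10; 2; 4; 14; 17]; [:: 15; 7; 9; 19; 22]; [:: 20; 12; 14; 24; 3]; [:: 1; 17; 19; 0; 8]; [:: 6; 22; 24; 5; 13]; [:: 11; 3; 0; 10; 18]; [:: 16; 8; 5; 15; 23]; [:: 21; 13; 10; 20; 4]; [:: 2; 18; 15; 1; 9]; [:: 7; 23; 20; 6; 14]; [:: 12; 4; 1; 11; 19]; [:: 17; 9; 6; 16; 24]; [:: 22; 14; 11; 21; 0]; [:: 3; 19; 16; 2; 5]; [:: 8; 24; 21; 7; 10]; [:: 13; 0; 2; 12; 15]; [:: 18; 5; 7; 17; 20]; [:: 23; 10; 12; 22; 1]; [:: 4; 15; 17; 3; 6]; [:: 9; 20; 22; 8; 11]; [:: 14; 1; 3; 13; 16]; [:: 19; 6; 8; 18; 21]; [:: 24; 11; 13; 23; 2]; [:: 0; 12; 3; 23; 24]; [:: 5; 17; 8; 4; 0]; [:: 10; 22; 13; 9; 5]; [:: 15; 3; 18; 14; 10]; [:: 20; 8; 23; 19; 15]; [:: 1; 13; 4; 24; 20]; [:: 6; 18; 9; 0; 1]; [:: 11; 23; 14; 5; 6]; [:: 16; 4; 19; 10; 11]; [:: 21; 9; 24; 15; 16]; [:: 2; 14; 0; 20; 21]; [:: 7; 19; 5; 1; 2]; [:: 12; 24; 10; 6; 7]; [:: 17; 0; 15; 11; 12]; [:: 22; 5; 20; 16; 17]; [:: 3; 10; 1; 21; 22];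 [:: 8; 15; 6; 2; 3]; [:: 13; 20; 11; 7; 8]; [:: 18; 1; 16; 12; 13]; [:: 23; 6; 21; 17; 18]; [:: 4; 11; 2; 22; 23]; [:: 9; 16; 7; 3; 4]; [:: 14; 21; 12; 8; 9]; [:: 19; 2; 17; 13; 14]; [:: 24; 7; 22; 18; 19]; [:: 0; 11; 4; 14; 15]; [:: 5; 16; 9; 19; 20]; [:: 10; 21; 14; 24; 1]; [:: 15; 2; 19; 0; 6]; [:: 20; 7; 24; 5; 11]; [:: 1; 12; 0; 10; 16]; [:: 6; 17; 5; 15; 21]; [:: 11; 22; 10; 20; 2]; [:: 16; 3; 15; 1; 7]; [:: 21; 8; 20; 6; 12]; [:: 2; 13; 1; 11; 17]; [:: 7; 18; 6; 16; 22]; [:: 12; 23; 11; 21; 3]; [:: 17; 4; 16; 2; 8]; [:: 22; 9; 21; 7; 13]; [:: 3; 14; 2; 12; 18]; [:: 8; 19; 7; 17; 23]; [:: 13; 24; 12; 22; 4]; [:: 18; 0; 17; 3; 9]; [:: 23; 5; 22; 8; 14]; [:: 4; 10; 3; 13; 19]; [:: 9; 15; 8; 18; 24]; [:: 14; 20; 13; 23; 0]; [:: 19; 1; 18; 4; 5]; [:: 24; 6; 23; 9; 10]; [:: 0; 7; 10; 14; 19]; [:: 5; 12; 15; 19; 24]; [:: 10; 17; 20; 24; 0]; [:: 15; 22; 1; 0; 5]; [:: 20; 3; 6; 5; 10]; [:: 1; 8; 11; 10; 15]; [:: 6; 13; 16; 15; 20]; [:: 11; 18; 21; 20; 1]; [::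 16; 23; 2; 1; 6]; [:: 21; 4; 7; 6; 11]; [:: 2; 9; 12; 11; 16]; [:: 7; 14; 17; 16; 21]; [:: 12; 19; 22; 21; 2]; [:: 17; 24; 3; 2; 7]; [:: 22; 0; 8; 7; 12]; [:: 3; 5; 13; 12; 17]; [:: 8; 10; 18; 17; 22]; [:: 13; 15; 23; 22; 3]; [:: 18; 20; 4; 3; 8]; [:: 23; 1; 9; 8; 13]; [:: 4; 6; 14; 13; 18]; [:: 9; 11; 19; 18; 23]; [:: 14; 16; 24; 23; 4]; [:: 19; 21; 0; 4; 9]; [:: 24; 2; 5; 9; 14]; [:: 0; 1; 16; 8; 10]; [:: 5; 6; 21; 13; 15]; [:: 10; 11; 2; 18; 20]; [:: 15; 16; 7; 23; 1]; [:: 20; 21; 12; 4; 6]; [:: 1; 2; 17; 9; 11]; [:: 6; 7; 22; 14; 16]; [:: 11; 12; 3; 19; 21]; [:: 16; 17; 8; 24; 2]; [:: 21; 22; 13; 0; 7]; [:: 2; 3; 18; 5; 12]; [:: 7; 8; 23; 10; 17]; [:: 12; 13; 4; 15; 22]; [:: 17; 18; 9; 20; 3]; [:: 22; 23; 14; 1; 8]; [:: 3; 4; 19; 6; 13]; [:: 8; 9; 24; 11; 18]; [:: 13; 14; 0; 16; 23]; [:: 18; 19; 5; 21; 4]; [:: 23; 24; 10; 2; 9]; [:: 4; 0; 15; 7; 14]; [:: 9; 5; 20; 12; 19]; [:: 14; 10; 1; 17; 24]; [:: 19; 15; 6; 22; 0]; [:: 24; 20; 11; 3; 5]; [:: 0;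 11; 5; 18; 9]; [:: 5; 16; 10; 23; 14]; [:: 10; 21; 15; 4; 19]; [:: 15; 2; 20; 9; 24]; [:: 20; 7; 1; 14; 0]; [:: 1; 12; 6; 19; 5]; [:: 6; 17; 11; 24; 10]; [:: 11; 22; 16; 0; 15]; [:: 16; 3; 21; 5; 20]; [:: 21; 8; 2; 10; 1]; [:: 2; 13; 7; 15; 6]; [:: 7; 18; 12; 20; 11]; [:: 12; 23; 17; 1; 16]; [:: 17; 4; 22; 6; 21]; [:: 22; 9; 3; 11; 2]; [:: 3; 14; 8; 16; 7]; [:: 8; 19; 13; 21; 12]; [:: 13; 24; 18; 2; 17]; [:: 18; 0; 23; 7; 22]; [:: 23; 5; 4; 12; 3]; [:: 4; 10; 9; 17; 8]; [:: 9; 15; 14; 22; 13]; [:: 14; 20; 19; 3; 18]; [:: 19; 1; 24; 8; 23]; [:: 24; 6; 0; 13; 4]; [:: 0; 7; 6; 17; 1]; [:: 5; 12; 11; 22; 6]; [:: 10; 17; 16; 3; 11]; [:: 15; 22; 21; 8; 16]; [:: 20; 3; 2; 13; 21]; [:: 1; 8; 7; 18; 2]; [:: 6; 13; 12; 23; 7]; [:: 11; 18; 17; 4; 12]; [:: 16; 23; 22; 9; 17]; [:: 21; 4; 3; 14; 22]; [:: 2; 9; 8; 19; 3]; [:: 7; 14; 13; 24; 8]; [:: 12; 19; 18; 0; 13]; [:: 17; 24; 23; 5; 18]; [:: 22; 0; 4; 10; 23]; [:: 3; 5; 9; 15; 4]; [:: 8; 10; 14; 20; 9]; [:: 13; 15;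 19; 1; 14]; [:: 18; 20; 24; 6; 19]; [:: 23; 1; 0; 11; 24]; [:: 4; 6; 5; 16; 0]; [:: 9; 11; 10; 21; 5]; [:: 14; 16; 15; 2; 10]; [:: 19; 21; 20; 7; 15]; [:: 24; 2; 1; 12; 20]; [:: 0; 10; 9; 24; 13]; [:: 5; 15; 14; 0; 18]; [:: 10; 20; 19; 5; 23]; [:: 15; 1; 24; 10; 4]; [:: 20; 6; 0; 15; 9]; [:: 1; 11; 5; 20; 14]; [:: 6; 16; 10; 1; 19]; [:: 11; 21; 15; 6; 24]; [:: 16; 2; 20; 11; 0]; [:: 21; 7; 1; 16; 5]; [:: 2; 12; 6; 21; 10]; [:: 7; 17; 11; 2; 15]; [:: 12; 22; 16; 7; 20]; [:: 17; 3; 21; 12; 1]; [:: 22; 8; 2; 17; 6]; [:: 3; 13; 7; 22; 11]; [:: 8; 18; 12; 3; 16]; [:: 13; 23; 17; 8; 21]; [:: 18; 4; 22; 13; 2]; [:: 23; 9; 3; 18; 7]; [:: 4; 14; 8; 23; 12]; [:: 9; 19; 13; 4; 17]; [:: 14; 24; 18; 9; 22]; [:: 19; 0; 23; 14; 3]; [:: 24; 5; 4; 19; 8]; [:: 0; 20; 10; 23; 1]; [:: 5; 1; 15; 4; 6]; [:: 10; 6; 20; 9; 11]; [:: 15; 11; 1; 14; 16]; [:: 20; 16; 6; 19; 21]; [:: 1; 21; 11; 24; 2]; [:: 6; 2; 16; 0; 7]; [:: 11; 7; 21; 5; 12]; [:: 16; 12; 2; 10; 17]; [:: 21; 17; 7;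 15; 22]; [:: 2; 22; 12; 20; 3]; [:: 7; 3; 17; 1; 8]; [:: 12; 8; 22; 6; 13]; [:: 17; 13; 3; 11; 18]; [:: 22; 18; 8; 16; 23]; [:: 3; 23; 13; 21; 4]; [:: 8; 4; 18; 2; 9]; [:: 13; 9; 23; 7; 14]; [:: 18; 14; 4; 12; 19]; [:: 23; 19; 9; 17; 24]; [:: 4; 24; 14; 22; 0]; [:: 9; 0; 19; 3; 5]; [:: 14; 5; 24; 8; 10]; [:: 19; 10; 0; 13; 15]; [:: 24; 15; 5; 18; 20]; [:: 0; 11; 13; 9; 20]; [:: 5; 16; 18; 14; 1]; [:: 10; 21; 23; 19; 6]; [:: 15; 2; 4; 24; 11]; [:: 20; 7; 9; 0; 16]; [:: 1; 12; 14; 5; 21]; [:: 6; 17; 19; 10; 2]; [:: 11; 22; 24; 15; 7]; [:: 16; 3; 0; 20; 12]; [:: 21; 8; 5; 1; 17]; [:: 2; 13; 10; 6; 22]; [:: 7; 18; 15; 11; 3]; [:: 12; 23; 20; 16; 8]; [:: 17; 4; 1; 21; 13]; [:: 22; 9; 6; 2; 18]; [:: 3; 14; 11; 7; 23]; [:: 8; 19; 16; 12; 4]; [:: 13; 24; 21; 17; 9]; [:: 18; 0; 2; 22; 14]; [:: 23; 5; 7; 3; 19]; [:: 4; 10; 12; 8; 24]; [:: 9; 15; 17; 13; 0]; [:: 14; 20; 22; 18; 5]; [:: 19; 1; 3; 23; 10]; [:: 24; 6; 8; 4; 15]; [:: 0; 21; 15; 18; 4]; [:: 5; 2; 20; 23;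 9]; [:: 10; 7; 1; 4; 14]; [:: 15; 12; 6; 9; 19]; [:: 20; 17; 11; 14; 24]; [:: 1; 22; 16; 19; 0]; [:: 6; 3; 21; 24; 5]; [:: 11; 8; 2; 0; 10]; [:: 16; 13; 7; 5; 15]; [:: 21; 18; 12; 10; 20]; [:: 2; 23; 17; 15; 1]; [:: 7; 4; 22; 20; 6]; [:: 12; 9; 3; 1; 11]; [:: 17; 14; 8; 6; 16]; [:: 22; 19; 13; 11; 21]; [:: 3; 24; 18; 16; 2]; [:: 8; 0; 23; 21; 7]; [:: 13; 5; 4; 2; 12]; [:: 18; 10; 9; 7; 17]; [:: 23; 15; 14; 12; 22]; [:: 4; 20; 19; 17; 3]; [:: 9; 1; 24; 22; 8]; [:: 14; 6; 0; 3; 13]; [:: 19; 11; 5; 8; 18]; [:: 24; 16; 10; 13; 23]; [:: 0; 5; 21; 2; 11]; [:: 5; 10; 2; 7; 16]; [:: 10; 15; 7; 12; 21]; [:: 15; 20; 12; 17; 2]; [:: 20; 1; 17; 22; 7]; [:: 1; 6; 22; 3; 12]; [:: 6; 11; 3; 8; 17]; [:: 11; 16; 8; 13; 22]; [:: 16; 21; 13; 18; 3]; [:: 21; 2; 18; 23; 8]; [:: 2; 7; 23; 4; 13]; [:: 7; 12; 4; 9; 18]; [:: 12; 17; 9; 14; 23]; [:: 17; 22; 14; 19; 4]; [:: 22; 3; 19; 24; 9]; [:: 3; 8; 24; 0; 14]; [:: 8; 13; 0; 5; 19]; [:: 13; 18; 5; 10; 24]; [:: 18; 23; 10; 15; 0];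 [:: 23; 4; 15; 20; 5]; [:: 4; 9; 20; 1; 10]; [:: 9; 14; 1; 6; 15]; [:: 14; 19; 6; 11; 20]; [:: 19; 24; 11; 16; 1]; [:: 24; 0; 16; 21; 6]; [:: 0; 2; 7; 24; 16]; [:: 5; 7; 12; 0; 21]; [:: 10; 12; 17; 5; 2]; [:: 15; 17; 22; 10; 7]; [:: 20; 22; 3; 15; 12]; [:: 1; 3; 8; 20; 17]; [:: 6; 8; 13; 1; 22]; [:: 11; 13; 18; 6; 3]; [:: 16; 18; 23; 11; 8]; [:: 21; 23; 4; 16; 13]; [:: 2; 4; 9; 21; 18]; [:: 7; 9; 14; 2; 23]; [:: 12; 14; 19; 7; 4]; [:: 17; 19; 24; 12; 9]; [:: 22; 24; 0; 17; 14]; [:: 3; 0; 5; 22; 19]; [:: 8; 5; 10; 3; 24]; [:: 13; 10; 15; 8; 0]; [:: 18; 15; 20; 13; 5]; [:: 23; 20; 1; 18; 10]; [:: 4; 1; 6; 23; 15]; [:: 9; 6; 11; 4; 20]; [:: 14; 11; 16; 9; 1]; [:: 19; 16; 21; 14; 6]; [:: 24; 21; 2; 19; 11]; [:: 0; 20; 22; 19; 2]; [:: 5; 1; 3; 24; 7]; [:: 10; 6; 8; 0; 12]; [:: 15; 11; 13; 5; 17]; [:: 20; 16; 18; 10; 22]; [:: 1; 21; 23; 15; 3]; [:: 6; 2; 4; 20; 8]; [:: 11; 7; 9; 1; 13]; [:: 16; 12; 14; 6; 18]; [:: 21; 17; 19; 11; 23]; [:: 2; 22; 24; 16; 4]; [::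 7; 3; 0; 21; 9]; [:: 12; 8; 5; 2; 14]; [:: 17; 13; 10; 7; 19]; [:: 22; 18; 15; 12; 24]; [:: 3; 23; 20; 17; 0]; [:: 8; 4; 1; 22; 5]; [:: 13; 9; 6; 3; 10]; [:: 18; 14; 11; 8; 15]; [:: 23; 19; 16; 13; 20]; [:: 4; 24; 21; 18; 1]; [:: 9; 0; 2; 23; 6]; [:: 14; 5; 7; 4; 11]; [:: 19; 10; 12; 9; 16]; [:: 24; 15; 17; 14; 21]; [:: 0; 11; 7; 19; 22]; [:: 5; 16; 12; 24; 3]; [:: 10; 21; 17; 0; 8]; [:: 15; 2; 22; 5; 13]; [:: 20; 7; 3; 10; 18]; [:: 1; 12; 8; 15; 23]; [:: 6; 17; 13; 20; 4]; [:: 11; 22; 18; 1; 9]; [:: 16; 3; 23; 6; 14]; [:: 21; 8; 4; 11; 19]; [:: 2; 13; 9; 16; 24]; [:: 7; 18; 14; 21; 0]; [:: 12; 23; 19; 2; 5]; [:: 17; 4; 24; 7; 10]; [:: 22; 9; 0; 12; 15]; [:: 3; 14; 5; 17; 20]; [:: 8; 19; 10; 22; 1]; [:: 13; 24; 15; 3; 6]; [:: 18; 0; 20; 8; 11]; [:: 23; 5; 1; 13; 16]; [:: 4; 10; 6; 18; 21]; [:: 9; 15; 11; 23; 2]; [:: 14; 20; 16; 4; 7]; [:: 19; 1; 21; 9; 12]; [:: 24; 6; 2; 14; 17]].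
Definition design_10_2 : seq (seq nat) := [:: [:: 0; 14; 5; 15; 8]; [:: 10; 5; 15; 6; 18]; [:: 1; 15; 6; 16; 9]; [:: 11; 6; 16; 7; 19]; [:: 2; 16; 7; 17; 0]; [:: 12; 7; 17; 8; 10]; [:: 3; 17; 8; 18; 1]; [:: 13; 8; 18; 9; 11]; [:: 4; 18; 9; 19; 2]; [:: 14; 9; 19; 0; 12]; [:: 5; 19; 0; 10; 3]; [:: 15; 0; 10; 1; 13]; [:: 6; 10; 1; 11; 4]; [:: 16; 1; 11; 2; 14]; [:: 7; 11; 2; 12; 5]; [:: 17; 2; 12; 3; 15]; [:: 8; 12; 3; 13; 6]; [:: 18; 3; 13; 4; 16]; [:: 9; 13; 4; 14; 7]; [:: 19; 4; 14; 5; 17]; [:: 0; 14; 6; 18; 1]; [:: 10; 5; 16; 9; 11]; [:: 1; 15; 7; 19; 2]; [:: 11; 6; 17; 0; 12]; [:: 2; 16; 8; 10; 3]; [:: 12; 7; 18; 1; 13]; [:: 3; 17; 9; 11; 4]; [:: 13; 8; 19; 2; 14]; [:: 4; 18; 0; 12; 5]; [:: 14; 9; 10; 3; 15]; [:: 5; 19; 1; 13; 6]; [:: 15; 0; 11; 4; 16]; [:: 6; 10; 2; 14; 7]; [:: 16; 1; 12; 5; 17]; [:: 7; 11; 3; 15; 8]; [:: 17; 2; 13; 6; 18]; [:: 8; 12; 4; 16; 9]; [:: 18; 3; 14; 7; 19]; [:: 9; 13; 5; 17; 0]; [:: 19; 4; 15; 8; 10]; [:: 0; 12; 2; 15; 10];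 [:: 10; 3; 12; 6; 1]; [:: 1; 13; 3; 16; 11]; [:: 11; 4; 13; 7; 2]; [:: 2; 14; 4; 17; 12]; [:: 12; 5; 14; 8; 3]; [:: 3; 15; 5; 18; 13]; [:: 13; 6; 15; 9; 4]; [:: 4; 16; 6; 19; 14]; [:: 14; 7; 16; 0; 5]; [:: 5; 17; 7; 10; 15]; [:: 15; 8; 17; 1; 6]; [:: 6; 18; 8; 11; 16]; [:: 16; 9; 18; 2; 7]; [:: 7; 19; 9; 12; 17]; [:: 17; 0; 19; 3; 8]; [:: 8; 10; 0; 13; 18]; [:: 18; 1; 10; 4; 9]; [:: 9; 11; 1; 14; 19]; [:: 19; 2; 11; 5; 0]; [:: 0; 13; 1; 14; 6]; [:: 10; 4; 11; 5; 16]; [:: 1; 14; 2; 15; 7]; [:: 11; 5; 12; 6; 17]; [:: 2; 15; 3; 16; 8]; [:: 12; 6; 13; 7; 18]; [:: 3; 16; 4; 17; 9]; [:: 13; 7; 14; 8; 19]; [:: 4; 17; 5; 18; 0]; [:: 14; 8; 15; 9; 10]; [:: 5; 18; 6; 19; 1]; [:: 15; 9; 16; 0; 11]; [:: 6; 19; 7; 10; 2]; [:: 16; 0; 17; 1; 12]; [:: 7; 10; 8; 11; 3]; [:: 17; 1; 18; 2; 13]; [:: 8; 11; 9; 12; 4]; [:: 18; 2; 19; 3; 14]; [:: 9; 12; 0; 13; 5]; [:: 19; 3; 10; 4; 15]; [:: 0; 10; 2; 17; 19]; [:: 10; 1; 12; 8; 0]; [:: 1; 11; 3; 18; 10]; [::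 11; 2; 13; 9; 1]; [:: 2; 12; 4; 19; 11]; [:: 12; 3; 14; 0; 2]; [:: 3; 13; 5; 10; 12]; [:: 13; 4; 15; 1; 3]; [:: 4; 14; 6; 11; 13]; [:: 14; 5; 16; 2; 4]; [:: 5; 15; 7; 12; 14]; [:: 15; 6; 17; 3; 5]; [:: 6; 16; 8; 13; 15]; [:: 16; 7; 18; 4; 6]; [:: 7; 17; 9; 14; 16]; [:: 17; 8; 19; 5; 7]; [:: 8; 18; 0; 15; 17]; [:: 18; 9; 10; 6; 8]; [:: 9; 19; 1; 16; 18]; [:: 19; 0; 11; 7; 9]; [:: 0; 12; 6; 16; 2]; [:: 10; 3; 16; 7; 12]; [:: 1; 13; 7; 17; 3]; [:: 11; 4; 17; 8; 13]; [:: 2; 14; 8; 18; 4]; [:: 12; 5; 18; 9; 14]; [:: 3; 15; 9; 19; 5]; [:: 13; 6; 19; 0; 15]; [:: 4; 16; 0; 10; 6]; [:: 14; 7; 10; 1; 16]; [:: 5; 17; 1; 11; 7]; [:: 15; 8; 11; 2; 17]; [:: 6; 18; 2; 12; 8]; [:: 16; 9; 12; 3; 18]; [:: 7; 19; 3; 13; 9]; [:: 17; 0; 13; 4; 19]; [:: 8; 10; 4; 14; 0]; [:: 18; 1; 14; 5; 10]; [:: 9; 11; 5; 15; 1]; [:: 19; 2; 15; 6; 11]; [:: 0; 12; 1; 11; 15]; [:: 10; 3; 11; 2; 6]; [:: 1; 13; 2; 12; 16]; [:: 11; 4; 12; 3; 7]; [:: 2; 14; 3; 13; 17]; [:: 12;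 5; 13; 4; 8]; [:: 3; 15; 4; 14; 18]; [:: 13; 6; 14; 5; 9]; [:: 4; 16; 5; 15; 19]; [:: 14; 7; 15; 6; 0]; [:: 5; 17; 6; 16; 10]; [:: 15; 8; 16; 7; 1]; [:: 6; 18; 7; 17; 11]; [:: 16; 9; 17; 8; 2]; [:: 7; 19; 8; 18; 12]; [:: 17; 0; 18; 9; 3]; [:: 8; 10; 9; 19; 13]; [:: 18; 1; 19; 0; 4]; [:: 9; 11; 0; 10; 14]; [:: 19; 2; 10; 1; 5]; [:: 0; 2; 11; 18; 4]; [:: 10; 12; 2; 9; 14]; [:: 1; 3; 12; 19; 5]; [:: 11; 13; 3; 0; 15]; [:: 2; 4; 13; 10; 6]; [:: 12; 14; 4; 1; 16]; [:: 3; 5; 14; 11; 7]; [:: 13; 15; 5; 2; 17]; [:: 4; 6; 15; 12; 8]; [:: 14; 16; 6; 3; 18]; [:: 5; 7; 16; 13; 9]; [:: 15; 17; 7; 4; 19]; [:: 6; 8; 17; 14; 0]; [:: 16; 18; 8; 5; 10]; [:: 7; 9; 18; 15; 1]; [:: 17; 19; 9; 6; 11]; [:: 8; 0; 19; 16; 2]; [:: 18; 10; 0; 7; 12]; [:: 9; 1; 10; 17; 3]; [:: 19; 11; 1; 8; 13]; [:: 0; 3; 16; 18; 6]; [:: 10; 13; 7; 9; 16]; [:: 1; 4; 17; 19; 7]; [:: 11; 14; 8; 0; 17]; [:: 2; 5; 18; 10; 8]; [:: 12; 15; 9; 1; 18]; [:: 3; 6; 19; 11; 9]; [:: 13; 16;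 0; 2; 19]; [:: 4; 7; 10; 12; 0]; [:: 14; 17; 1; 3; 10]; [:: 5; 8; 11; 13; 1]; [:: 15; 18; 2; 4; 11]; [:: 6; 9; 12; 14; 2]; [:: 16; 19; 3; 5; 12]; [:: 7; 0; 13; 15; 3]; [:: 17; 10; 4; 6; 13]; [:: 8; 1; 14; 16; 4]; [:: 18; 11; 5; 7; 14]; [:: 9; 2; 15; 17; 5]; [:: 19; 12; 6; 8; 15]].
Definition design_15_2 : seq (seq nat) := [:: [:: 0; 2; 22; 23; 8]; [:: 15; 17; 8; 9; 23]; [:: 1; 3; 23; 24; 9]; [:: 16; 18; 9; 10; 24]; [:: 2; 4; 24; 25; 10]; [:: 17; 19; 10; 11; 25]; [:: 3; 5; 25; 26; 11]; [:: 18; 20; 11; 12; 26]; [:: 4; 6; 26; 27; 12]; [:: 19; 21; 12; 13; 27]; [:: 5; 7; 27; 28; 13]; [:: 20; 22; 13; 14; 28]; [:: 6; 8; 28; 29; 14]; [:: 21; 23; 14; 0; 29]; [:: 7; 9; 29; 15; 0]; [:: 22; 24; 0; 1; 15]; [:: 8; 10; 15; 16; 1]; [:: 23; 25; 1; 2; 16]; [:: 9; 11; 16; 17; 2]; [:: 24; 26; 2; 3; 17]; [:: 10; 12; 17; 18; 3]; [:: 25; 27; 3; 4; 18]; [:: 11; 13; 18; 19; 4]; [:: 26; 28; 4; 5; 19]; [:: 12; 14; 19; 20; 5]; [:: 27; 29; 5; 6; 20]; [:: 13; 0; 20; 21; 6]; [:: 28; 15; 6; 7; 21]; [:: 14; 1;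 21; 22; 7]; [:: 29; 16; 7; 8; 22]; [:: 0; 17; 16; 10; 2]; [:: 15; 3; 2; 25; 17]; [:: 1; 18; 17; 11; 3]; [:: 16; 4; 3; 26; 18]; [:: 2; 19; 18; 12; 4]; [:: 17; 5; 4; 27; 19]; [:: 3; 20; 19; 13; 5]; [:: 18; 6; 5; 28; 20]; [:: 4; 21; 20; 14; 6]; [:: 19; 7; 6; 29; 21]; [:: 5; 22; 21; 0; 7]; [:: 20; 8; 7; 15; 22]; [:: 6; 23; 22; 1; 8]; [:: 21; 9; 8; 16; 23]; [:: 7; 24; 23; 2; 9]; [:: 22; 10; 9; 17; 24]; [:: 8; 25; 24; 3; 10]; [:: 23; 11; 10; 18; 25]; [:: 9; 26; 25; 4; 11]; [:: 24; 12; 11; 19; 26]; [:: 10; 27; 26; 5; 12]; [:: 25; 13; 12; 20; 27]; [:: 11; 28; 27; 6; 13]; [:: 26; 14; 13; 21; 28]; [:: 12; 29; 28; 7; 14]; [:: 27; 0; 14; 22; 29]; [:: 13; 15; 29; 8; 0]; [:: 28; 1; 0; 23; 15]; [:: 14; 16; 15; 9; 1]; [:: 29; 2; 1; 24; 16]; [:: 0; 18; 6; 29; 1]; [:: 15; 4; 21; 0; 16]; [:: 1; 19; 7; 15; 2]; [:: 16; 5; 22; 1; 17]; [:: 2; 20; 8; 16; 3]; [:: 17; 6; 23; 2; 18]; [:: 3; 21; 9; 17; 4]; [:: 18; 7; 24; 3; 19]; [:: 4; 22; 10; 18; 5]; [:: 19; 8; 25; 4; 20]; [:: 5; 23; 11;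 19; 6]; [:: 20; 9; 26; 5; 21]; [:: 6; 24; 12; 20; 7]; [:: 21; 10; 27; 6; 22]; [:: 7; 25; 13; 21; 8]; [:: 22; 11; 28; 7; 23]; [:: 8; 26; 14; 22; 9]; [:: 23; 12; 29; 8; 24]; [:: 9; 27; 0; 23; 10]; [:: 24; 13; 15; 9; 25]; [:: 10; 28; 1; 24; 11]; [:: 25; 14; 16; 10; 26]; [:: 11; 29; 2; 25; 12]; [:: 26; 0; 17; 11; 27]; [:: 12; 15; 3; 26; 13]; [:: 27; 1; 18; 12; 28]; [:: 13; 16; 4; 27; 14]; [:: 28; 2; 19; 13; 29]; [:: 14; 17; 5; 28; 0]; [:: 29; 3; 20; 14; 15]; [:: 0; 17; 6; 21; 19]; [:: 15; 3; 21; 7; 5]; [:: 1; 18; 7; 22; 20]; [:: 16; 4; 22; 8; 6]; [:: 2; 19; 8; 23; 21]; [:: 17; 5; 23; 9; 7]; [:: 3; 20; 9; 24; 22]; [:: 18; 6; 24; 10; 8]; [:: 4; 21; 10; 25; 23]; [:: 19; 7; 25; 11; 9]; [:: 5; 22; 11; 26; 24]; [:: 20; 8; 26; 12; 10]; [:: 6; 23; 12; 27; 25]; [:: 21; 9; 27; 13; 11]; [:: 7; 24; 13; 28; 26]; [:: 22; 10; 28; 14; 12]; [:: 8; 25; 14; 29; 27]; [:: 23; 11; 29; 0; 13]; [:: 9; 26; 0; 15; 28]; [:: 24; 12; 15; 1; 14]; [:: 10; 27; 1; 16; 29]; [:: 25; 13; 16; 2; 0]; [:: 11; 28; 2; 17;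 15]; [:: 26; 14; 17; 3; 1]; [:: 12; 29; 3; 18; 16]; [:: 27; 0; 18; 4; 2]; [:: 13; 15; 4; 19; 17]; [:: 28; 1; 19; 5; 3]; [:: 14; 16; 5; 20; 18]; [:: 29; 2; 20; 6; 4]; [:: 0; 22; 15; 11; 5]; [:: 15; 8; 1; 26; 20]; [:: 1; 23; 16; 12; 6]; [:: 16; 9; 2; 27; 21]; [:: 2; 24; 17; 13; 7]; [:: 17; 10; 3; 28; 22]; [:: 3; 25; 18; 14; 8]; [:: 18; 11; 4; 29; 23]; [:: 4; 26; 19; 0; 9]; [:: 19; 12; 5; 15; 24]; [:: 5; 27; 20; 1; 10]; [:: 20; 13; 6; 16; 25]; [:: 6; 28; 21; 2; 11]; [:: 21; 14; 7; 17; 26]; [:: 7; 29; 22; 3; 12]; [:: 22; 0; 8; 18; 27]; [:: 8; 15; 23; 4; 13]; [:: 23; 1; 9; 19; 28]; [:: 9; 16; 24; 5; 14]; [:: 24; 2; 10; 20; 29]; [:: 10; 17; 25; 6; 0]; [:: 25; 3; 11; 21; 15]; [:: 11; 18; 26; 7; 1]; [:: 26; 4; 12; 22; 16]; [:: 12; 19; 27; 8; 2]; [:: 27; 5; 13; 23; 17]; [:: 13; 20; 28; 9; 3]; [:: 28; 6; 14; 24; 18]; [:: 14; 21; 29; 10; 4]; [:: 29; 7; 0; 25; 19]; [:: 0; 19; 6; 28; 16]; [:: 15; 5; 21; 14; 2]; [:: 1; 20; 7; 29; 17]; [:: 16; 6; 22; 0; 3]; [:: 2; 21; 8; 15; 18];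 [:: 17; 7; 23; 1; 4]; [:: 3; 22; 9; 16; 19]; [:: 18; 8; 24; 2; 5]; [:: 4; 23; 10; 17; 20]; [:: 19; 9; 25; 3; 6]; [:: 5; 24; 11; 18; 21]; [:: 20; 10; 26; 4; 7]; [:: 6; 25; 12; 19; 22]; [:: 21; 11; 27; 5; 8]; [:: 7; 26; 13; 20; 23]; [:: 22; 12; 28; 6; 9]; [:: 8; 27; 14; 21; 24]; [:: 23; 13; 29; 7; 10]; [:: 9; 28; 0; 22; 25]; [:: 24; 14; 15; 8; 11]; [:: 10; 29; 1; 23; 26]; [:: 25; 0; 16; 9; 12]; [:: 11; 15; 2; 24; 27]; [:: 26; 1; 17; 10; 13]; [:: 12; 16; 3; 25; 28]; [:: 27; 2; 18; 11; 14]; [:: 13; 17; 4; 26; 29]; [:: 28; 3; 19; 12; 0]; [:: 14; 18; 5; 27; 15]; [:: 29; 4; 20; 13; 1]; [:: 0; 20; 6; 26; 3]; [:: 15; 6; 21; 12; 18]; [:: 1; 21; 7; 27; 4]; [:: 16; 7; 22; 13; 19]; [:: 2; 22; 8; 28; 5]; [:: 17; 8; 23; 14; 20]; [:: 3; 23; 9; 29; 6]; [:: 18; 9; 24; 0; 21]; [:: 4; 24; 10; 15; 7]; [:: 19; 10; 25; 1; 22]; [:: 5; 25; 11; 16; 8]; [:: 20; 11; 26; 2; 23]; [:: 6; 26; 12; 17; 9]; [:: 21; 12; 27; 3; 24]; [:: 7; 27; 13; 18; 10]; [:: 22; 13; 28; 4; 25]; [:: 8; 28; 14; 19; 11]; [::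 23; 14; 29; 5; 26]; [:: 9; 29; 0; 20; 12]; [:: 24; 0; 15; 6; 27]; [:: 10; 15; 1; 21; 13]; [:: 25; 1; 16; 7; 28]; [:: 11; 16; 2; 22; 14]; [:: 26; 2; 17; 8; 29]; [:: 12; 17; 3; 23; 0]; [:: 27; 3; 18; 9; 15]; [:: 13; 18; 4; 24; 1]; [:: 28; 4; 19; 10; 16]; [:: 14; 19; 5; 25; 2]; [:: 29; 5; 20; 11; 17]; [:: 0; 15; 2; 19; 25]; [:: 15; 1; 17; 5; 11]; [:: 1; 16; 3; 20; 26]; [:: 16; 2; 18; 6; 12]; [:: 2; 17; 4; 21; 27]; [:: 17; 3; 19; 7; 13]; [:: 3; 18; 5; 22; 28]; [:: 18; 4; 20; 8; 14]; [:: 4; 19; 6; 23; 29]; [:: 19; 5; 21; 9; 0]; [:: 5; 20; 7; 24; 15]; [:: 20; 6; 22; 10; 1]; [:: 6; 21; 8; 25; 16]; [:: 21; 7; 23; 11; 2]; [:: 7; 22; 9; 26; 17]; [:: 22; 8; 24; 12; 3]; [:: 8; 23; 10; 27; 18]; [:: 23; 9; 25; 13; 4]; [:: 9; 24; 11; 28; 19]; [:: 24; 10; 26; 14; 5]; [:: 10; 25; 12; 29; 20]; [:: 25; 11; 27; 0; 6]; [:: 11; 26; 13; 15; 21]; [:: 26; 12; 28; 1; 7]; [:: 12; 27; 14; 16; 22]; [:: 27; 13; 29; 2; 8]; [:: 13; 28; 0; 17; 23]; [:: 28; 14; 15; 3; 9]; [:: 14; 29; 1; 18; 24]; [:: 29;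 0; 16; 4; 10]; [:: 0; 16; 15; 13; 7]; [:: 15; 2; 1; 28; 22]; [:: 1; 17; 16; 14; 8]; [:: 16; 3; 2; 29; 23]; [:: 2; 18; 17; 0; 9]; [:: 17; 4; 3; 15; 24]; [:: 3; 19; 18; 1; 10]; [:: 18; 5; 4; 16; 25]; [:: 4; 20; 19; 2; 11]; [:: 19; 6; 5; 17; 26]; [:: 5; 21; 20; 3; 12]; [:: 20; 7; 6; 18; 27]; [:: 6; 22; 21; 4; 13]; [:: 21; 8; 7; 19; 28]; [:: 7; 23; 22; 5; 14]; [:: 22; 9; 8; 20; 29]; [:: 8; 24; 23; 6; 0]; [:: 23; 10; 9; 21; 15]; [:: 9; 25; 24; 7; 1]; [:: 24; 11; 10; 22; 16]; [:: 10; 26; 25; 8; 2]; [:: 25; 12; 11; 23; 17]; [:: 11; 27; 26; 9; 3]; [:: 26; 13; 12; 24; 18]; [:: 12; 28; 27; 10; 4]; [:: 27; 14; 13; 25; 19]; [:: 13; 29; 28; 11; 5]; [:: 28; 0; 14; 26; 20]; [:: 14; 15; 29; 12; 6]; [:: 29; 1; 0; 27; 21]; [:: 0; 20; 1; 25; 12]; [:: 15; 6; 16; 11; 27]; [:: 1; 21; 2; 26; 13]; [:: 16; 7; 17; 12; 28]; [:: 2; 22; 3; 27; 14]; [:: 17; 8; 18; 13; 29]; [:: 3; 23; 4; 28; 0]; [:: 18; 9; 19; 14; 15]; [:: 4; 24; 5; 29; 1]; [:: 19; 10; 20; 0; 16]; [:: 5; 25; 6; 15; 2]; [:: 20; 11;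 21; 1; 17]; [:: 6; 26; 7; 16; 3]; [:: 21; 12; 22; 2; 18]; [:: 7; 27; 8; 17; 4]; [:: 22; 13; 23; 3; 19]; [:: 8; 28; 9; 18; 5]; [:: 23; 14; 24; 4; 20]; [:: 9; 29; 10; 19; 6]; [:: 24; 0; 25; 5; 21]; [:: 10; 15; 11; 20; 7]; [:: 25; 1; 26; 6; 22]; [:: 11; 16; 12; 21; 8]; [:: 26; 2; 27; 7; 23]; [:: 12; 17; 13; 22; 9]; [:: 27; 3; 28; 8; 24]; [:: 13; 18; 14; 23; 10]; [:: 28; 4; 29; 9; 25]; [:: 14; 19; 0; 24; 11]; [:: 29; 5; 15; 10; 26]; [:: 0; 4; 17; 24; 3]; [:: 15; 19; 3; 10; 18]; [:: 1; 5; 18; 25; 4]; [:: 16; 20; 4; 11; 19]; [:: 2; 6; 19; 26; 5]; [:: 17; 21; 5; 12; 20]; [:: 3; 7; 20; 27; 6]; [:: 18; 22; 6; 13; 21]; [:: 4; 8; 21; 28; 7]; [:: 19; 23; 7; 14; 22]; [:: 5; 9; 22; 29; 8]; [:: 20; 24; 8; 0; 23]; [:: 6; 10; 23; 15; 9]; [:: 21; 25; 9; 1; 24]; [:: 7; 11; 24; 16; 10]; [:: 22; 26; 10; 2; 25]; [:: 8; 12; 25; 17; 11]; [:: 23; 27; 11; 3; 26]; [:: 9; 13; 26; 18; 12]; [:: 24; 28; 12; 4; 27]; [:: 10; 14; 27; 19; 13]; [:: 25; 29; 13; 5; 28]; [:: 11; 0; 28; 20; 14]; [:: 26; 15; 14;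 6; 29]; [:: 12; 1; 29; 21; 0]; [:: 27; 16; 0; 7; 15]; [:: 13; 2; 15; 22; 1]; [:: 28; 17; 1; 8; 16]; [:: 14; 3; 16; 23; 2]; [:: 29; 18; 2; 9; 17]; [:: 0; 19; 21; 11; 6]; [:: 15; 5; 7; 26; 21]; [:: 1; 20; 22; 12; 7]; [:: 16; 6; 8; 27; 22]; [:: 2; 21; 23; 13; 8]; [:: 17; 7; 9; 28; 23]; [:: 3; 22; 24; 14; 9]; [:: 18; 8; 10; 29; 24]; [:: 4; 23; 25; 0; 10]; [:: 19; 9; 11; 15; 25]; [:: 5; 24; 26; 1; 11]; [:: 20; 10; 12; 16; 26]; [:: 6; 25; 27; 2; 12]; [:: 21; 11; 13; 17; 27]; [:: 7; 26; 28; 3; 13]; [:: 22; 12; 14; 18; 28]; [:: 8; 27; 29; 4; 14]; [:: 23; 13; 0; 19; 29]; [:: 9; 28; 15; 5; 0]; [:: 24; 14; 1; 20; 15]; [:: 10; 29; 16; 6; 1]; [:: 25; 0; 2; 21; 16]; [:: 11; 15; 17; 7; 2]; [:: 26; 1; 3; 22; 17]; [:: 12; 16; 18; 8; 3]; [:: 27; 2; 4; 23; 18]; [:: 13; 17; 19; 9; 4]; [:: 28; 3; 5; 24; 19]; [:: 14; 18; 20; 10; 5]; [:: 29; 4; 6; 25; 20]; [:: 0; 22; 4; 20; 27]; [:: 15; 8; 19; 6; 13]; [:: 1; 23; 5; 21; 28]; [:: 16; 9; 20; 7; 14]; [:: 2; 24; 6; 22; 29]; [:: 17; 10; 21; 8;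 0]; [:: 3; 25; 7; 23; 15]; [:: 18; 11; 22; 9; 1]; [:: 4; 26; 8; 24; 16]; [:: 19; 12; 23; 10; 2]; [:: 5; 27; 9; 25; 17]; [:: 20; 13; 24; 11; 3]; [:: 6; 28; 10; 26; 18]; [:: 21; 14; 25; 12; 4]; [:: 7; 29; 11; 27; 19]; [:: 22; 0; 26; 13; 5]; [:: 8; 15; 12; 28; 20]; [:: 23; 1; 27; 14; 6]; [:: 9; 16; 13; 29; 21]; [:: 24; 2; 28; 0; 7]; [:: 10; 17; 14; 15; 22]; [:: 25; 3; 29; 1; 8]; [:: 11; 18; 0; 16; 23]; [:: 26; 4; 15; 2; 9]; [:: 12; 19; 1; 17; 24]; [:: 27; 5; 16; 3; 10]; [:: 13; 20; 2; 18; 25]; [:: 28; 6; 17; 4; 11]; [:: 14; 21; 3; 19; 26]; [:: 29; 7; 18; 5; 12]; [:: 0; 15; 8; 25; 9]; [:: 15; 1; 23; 11; 24]; [:: 1; 16; 9; 26; 10]; [:: 16; 2; 24; 12; 25]; [:: 2; 17; 10; 27; 11]; [:: 17; 3; 25; 13; 26]; [:: 3; 18; 11; 28; 12]; [:: 18; 4; 26; 14; 27]; [:: 4; 19; 12; 29; 13]; [:: 19; 5; 27; 0; 28]; [:: 5; 20; 13; 15; 14]; [:: 20; 6; 28; 1; 29]; [:: 6; 21; 14; 16; 0]; [:: 21; 7; 29; 2; 15]; [:: 7; 22; 0; 17; 1]; [:: 22; 8; 15; 3; 16]; [:: 8; 23; 1; 18; 2]; [:: 23; 9; 16; 4; 17];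 [:: 9; 24; 2; 19; 3]; [:: 24; 10; 17; 5; 18]; [:: 10; 25; 3; 20; 4]; [:: 25; 11; 18; 6; 19]; [:: 11; 26; 4; 21; 5]; [:: 26; 12; 19; 7; 20]; [:: 12; 27; 5; 22; 6]; [:: 27; 13; 20; 8; 21]; [:: 13; 28; 6; 23; 7]; [:: 28; 14; 21; 9; 22]; [:: 14; 29; 7; 24; 8]; [:: 29; 0; 22; 10; 23]; [:: 0; 18; 1; 26; 4]; [:: 15; 4; 16; 12; 19]; [:: 1; 19; 2; 27; 5]; [:: 16; 5; 17; 13; 20]; [:: 2; 20; 3; 28; 6]; [:: 17; 6; 18; 14; 21]; [:: 3; 21; 4; 29; 7]; [:: 18; 7; 19; 0; 22]; [:: 4; 22; 5; 15; 8]; [:: 19; 8; 20; 1; 23]; [:: 5; 23; 6; 16; 9]; [:: 20; 9; 21; 2; 24]; [:: 6; 24; 7; 17; 10]; [:: 21; 10; 22; 3; 25]; [:: 7; 25; 8; 18; 11]; [:: 22; 11; 23; 4; 26]; [:: 8; 26; 9; 19; 12]; [:: 23; 12; 24; 5; 27]; [:: 9; 27; 10; 20; 13]; [:: 24; 13; 25; 6; 28]; [:: 10; 28; 11; 21; 14]; [:: 25; 14; 26; 7; 29]; [:: 11; 29; 12; 22; 0]; [:: 26; 0; 27; 8; 15]; [:: 12; 15; 13; 23; 1]; [:: 27; 1; 28; 9; 16]; [:: 13; 16; 14; 24; 2]; [:: 28; 2; 29; 10; 17]; [:: 14; 17; 0; 25; 3]; [:: 29; 3; 15; 11; 18]; [::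 0; 16; 5; 26; 6]; [:: 15; 2; 20; 12; 21]; [:: 1; 17; 6; 27; 7]; [:: 16; 3; 21; 13; 22]; [:: 2; 18; 7; 28; 8]; [:: 17; 4; 22; 14; 23]; [:: 3; 19; 8; 29; 9]; [:: 18; 5; 23; 0; 24]; [:: 4; 20; 9; 15; 10]; [:: 19; 6; 24; 1; 25]; [:: 5; 21; 10; 16; 11]; [:: 20; 7; 25; 2; 26]; [:: 6; 22; 11; 17; 12]; [:: 21; 8; 26; 3; 27]; [:: 7; 23; 12; 18; 13]; [:: 22; 9; 27; 4; 28]; [:: 8; 24; 13; 19; 14]; [:: 23; 10; 28; 5; 29]; [:: 9; 25; 14; 20; 0]; [:: 24; 11; 29; 6; 15]; [:: 10; 26; 0; 21; 1]; [:: 25; 12; 15; 7; 16]; [:: 11; 27; 1; 22; 2]; [:: 26; 13; 16; 8; 17]; [:: 12; 28; 2; 23; 3]; [:: 27; 14; 17; 9; 18]; [:: 13; 29; 3; 24; 4]; [:: 28; 0; 18; 10; 19]; [:: 14; 15; 4; 25; 5]; [:: 29; 1; 19; 11; 20]; [:: 0; 5; 17; 20; 7]; [:: 15; 20; 3; 6; 22]; [:: 1; 6; 18; 21; 8]; [:: 16; 21; 4; 7; 23]; [:: 2; 7; 19; 22; 9]; [:: 17; 22; 5; 8; 24]; [:: 3; 8; 20; 23; 10]; [:: 18; 23; 6; 9; 25]; [:: 4; 9; 21; 24; 11]; [:: 19; 24; 7; 10; 26]; [:: 5; 10; 22; 25; 12]; [:: 20; 25; 8; 11; 27]; [:: 6;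 11; 23; 26; 13]; [:: 21; 26; 9; 12; 28]; [:: 7; 12; 24; 27; 14]; [:: 22; 27; 10; 13; 29]; [:: 8; 13; 25; 28; 0]; [:: 23; 28; 11; 14; 15]; [:: 9; 14; 26; 29; 1]; [:: 24; 29; 12; 0; 16]; [:: 10; 0; 27; 15; 2]; [:: 25; 15; 13; 1; 17]; [:: 11; 1; 28; 16; 3]; [:: 26; 16; 14; 2; 18]; [:: 12; 2; 29; 17; 4]; [:: 27; 17; 0; 3; 19]; [:: 13; 3; 15; 18; 5]; [:: 28; 18; 1; 4; 20]; [:: 14; 4; 16; 19; 6]; [:: 29; 19; 2; 5; 21]; [:: 0; 19; 1; 16; 21]; [:: 15; 5; 16; 2; 7]; [:: 1; 20; 2; 17; 22]; [:: 16; 6; 17; 3; 8]; [:: 2; 21; 3; 18; 23]; [:: 17; 7; 18; 4; 9]; [:: 3; 22; 4; 19; 24]; [:: 18; 8; 19; 5; 10]; [:: 4; 23; 5; 20; 25]; [:: 19; 9; 20; 6; 11]; [:: 5; 24; 6; 21; 26]; [:: 20; 10; 21; 7; 12]; [:: 6; 25; 7; 22; 27]; [:: 21; 11; 22; 8; 13]; [:: 7; 26; 8; 23; 28]; [:: 22; 12; 23; 9; 14]; [:: 8; 27; 9; 24; 29]; [:: 23; 13; 24; 10; 0]; [:: 9; 28; 10; 25; 15]; [:: 24; 14; 25; 11; 1]; [:: 10; 29; 11; 26; 16]; [:: 25; 0; 26; 12; 2]; [:: 11; 15; 12; 27; 17]; [:: 26; 1; 27; 13; 3]; [:: 12; 16;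 13; 28; 18]; [:: 27; 2; 28; 14; 4]; [:: 13; 17; 14; 29; 19]; [:: 28; 3; 29; 0; 5]; [:: 14; 18; 0; 15; 20]; [:: 29; 4; 15; 1; 6]; [:: 0; 7; 20; 23; 6]; [:: 15; 22; 6; 9; 21]; [:: 1; 8; 21; 24; 7]; [:: 16; 23; 7; 10; 22]; [:: 2; 9; 22; 25; 8]; [:: 17; 24; 8; 11; 23]; [:: 3; 10; 23; 26; 9]; [:: 18; 25; 9; 12; 24]; [:: 4; 11; 24; 27; 10]; [:: 19; 26; 10; 13; 25]; [:: 5; 12; 25; 28; 11]; [:: 20; 27; 11; 14; 26]; [:: 6; 13; 26; 29; 12]; [:: 21; 28; 12; 0; 27]; [:: 7; 14; 27; 15; 13]; [:: 22; 29; 13; 1; 28]; [:: 8; 0; 28; 16; 14]; [:: 23; 15; 14; 2; 29]; [:: 9; 1; 29; 17; 0]; [:: 24; 16; 0; 3; 15]; [:: 10; 2; 15; 18; 1]; [:: 25; 17; 1; 4; 16]; [:: 11; 3; 16; 19; 2]; [:: 26; 18; 2; 5; 17]; [:: 12; 4; 17; 20; 3]; [:: 27; 19; 3; 6; 18]; [:: 13; 5; 18; 21; 4]; [:: 28; 20; 4; 7; 19]; [:: 14; 6; 19; 22; 5]; [:: 29; 21; 5; 8; 20]; [:: 0; 17; 19; 8; 11]; [:: 15; 3; 5; 23; 26]; [:: 1; 18; 20; 9; 12]; [:: 16; 4; 6; 24; 27]; [:: 2; 19; 21; 10; 13]; [:: 17; 5; 7; 25; 28]; [:: 3; 20; 22;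 11; 14]; [:: 18; 6; 8; 26; 29]; [:: 4; 21; 23; 12; 0]; [:: 19; 7; 9; 27; 15]; [:: 5; 22; 24; 13; 1]; [:: 20; 8; 10; 28; 16]; [:: 6; 23; 25; 14; 2]; [:: 21; 9; 11; 29; 17]; [:: 7; 24; 26; 0; 3]; [:: 22; 10; 12; 15; 18]; [:: 8; 25; 27; 1; 4]; [:: 23; 11; 13; 16; 19]; [:: 9; 26; 28; 2; 5]; [:: 24; 12; 14; 17; 20]; [:: 10; 27; 29; 3; 6]; [:: 25; 13; 0; 18; 21]; [:: 11; 28; 15; 4; 7]; [:: 26; 14; 1; 19; 22]; [:: 12; 29; 16; 5; 8]; [:: 27; 0; 2; 20; 23]; [:: 13; 15; 17; 6; 9]; [:: 28; 1; 3; 21; 24]; [:: 14; 16; 18; 7; 10]; [:: 29; 2; 4; 22; 25]; [:: 0; 2; 26; 29; 3]; [:: 15; 17; 12; 0; 18]; [:: 1; 3; 27; 15; 4]; [:: 16; 18; 13; 1; 19]; [:: 2; 4; 28; 16; 5]; [:: 17; 19; 14; 2; 20]; [:: 3; 5; 29; 17; 6]; [:: 18; 20; 0; 3; 21]; [:: 4; 6; 15; 18; 7]; [:: 19; 21; 1; 4; 22]; [:: 5; 7; 16; 19; 8]; [:: 20; 22; 2; 5; 23]; [:: 6; 8; 17; 20; 9]; [:: 21; 23; 3; 6; 24]; [:: 7; 9; 18; 21; 10]; [:: 22; 24; 4; 7; 25]; [:: 8; 10; 19; 22; 11]; [:: 23; 25; 5; 8; 26]; [:: 9; 11; 20; 23;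 12]; [:: 24; 26; 6; 9; 27]; [:: 10; 12; 21; 24; 13]; [:: 25; 27; 7; 10; 28]; [:: 11; 13; 22; 25; 14]; [:: 26; 28; 8; 11; 29]; [:: 12; 14; 23; 26; 0]; [:: 27; 29; 9; 12; 15]; [:: 13; 0; 24; 27; 1]; [:: 28; 15; 10; 13; 16]; [:: 14; 1; 25; 28; 2]; [:: 29; 16; 11; 14; 17]].

Lemma certificate_5_3 : cs_certificate 5 3 design_5_3.
Proof. by vm_compute. Qed.

Lemma certificate_5_5 : cs_certificate 5 5 design_5_5.
Proof. by vm_compute. Qed.

Lemma certificate_10_2 : cs_certificate 10 2 design_10_2.
Proof. by vm_compute. Qed.

Lemma certificate_15_2 : cs_certificate 15 2 design_15_2.
Proof. by vm_compute. Qed.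

Theorem lemma3p4 :
  forall g n : nat, (g, n) \in [:: (5, 3); (5, 5); (10, 2); (15, 2)] ->
  exists (P : {set {set 'I_(g * n)}}) (A : {set {set {set 'I_(g * n)}}}),
    is_CS_K4e g n 0 set0 P A.
Proof.
move=> g n; rewrite !inE => /or4P[]/eqP[-> ->].
- exact: cs_certificate_sound (erefl : 5 * 3 = 15) certificate_5_3.
- exact: cs_certificate_sound (erefl : 5 * 5 = 25) certificate_5_5.
- exact: cs_certificate_sound (erefl : 10 * 2 = 20) certificate_10_2.
- exact: cs_certificate_sound (erefl : 15 * 2 = 30) certificate_15_2.
Qed.
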